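(* Let $h,g:\mathbb{Z}^2\to\mathbb{C}$ and $\alpha\in\mathbb{C}$. For $f=f(n,m)$ write $\widetilde f=f(n+1,m)$, $\widehat f=f(n,m+1)$, $\widetilde{\widetilde f}=f(n+2,m)$, etc. Consider, for a spectral parameter $p\in\mathbb{C}$, the linear system for $\varphi:\mathbb{Z}^2\to\mathbb{C}$ $$\widetilde{\widetilde{\varphi}}+h\,\widetilde{\varphi}+\alpha^2\varphi=p^2\varphi,\qquad \widehat{\varphi}=\widetilde{\varphi}-g\,\varphi .$$ Suppose this system is compatible for all $p$, i.e. the two values of $\varphi(n+2,m+1)$ obtained by computing $\widehat{\widetilde{\widetilde{\varphi}}}$ and $\widetilde{\widetilde{\widehat{\varphi}}}$ via the system coincide identically in the free data $\varphi(n,m),\varphi(n+1,m)$. Then $$\widehat{h}-\widetilde{h}=\widetilde{\widetilde{g}}-g,$$ and $(h+\widetilde g)\,g$ is invariant under the shift $n\mapsto n+1$, so that after one summation in the $n$-direction $(h+\widetilde{g})\,g=\beta^2-\alpha^2$, where $\beta^2-\alpha^2$ is the constant of integration. Moreover, if $(h+\widetilde g)g=\beta^2-\alpha^2$ with $\beta$ a constant, then every solution $\varphi$ of the system satisfies $$\widehat{\widehat{\varphi}}+\eta\,\widehat{\varphi}+\beta^2\varphi=p^2\varphi,\qquad \eta=h+\widetilde{g}+\widehat{g}.$$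
   Context: Shift notation: for a function $f$ on $\mathbb{Z}^2$, $\widetilde f(n,m)=f(n+1,m)$ and $\widehat f(n,m)=f(n,m+1)$; combined accents denote composed shifts. *)

From mathcomp Require Import all_boot all_algebra complex.
From mathcomp Require Import reals.
Set Implicit Arguments. Unset Strict Implicit. Unset Printing Implicit Defensive.
Import GRing.Theory Num.Theory.
Local Open Scope ring_scope.

(* Complex numbers are modelled as R[i] for a realType R (so C = R[i]).
   Functions Z^2 -> C are functions int -> int -> R[i]; f n m = f(n,m).
   tilde f (n,m) = f(n+1,m), hat f (n,m) = f(n,m+1). *)

Definition lax_solution (R : realType) (h g : int -> int -> R[i]) (alpha p : R[i])
    (phi : int -> int -> R[i]) : Prop :=
  forall n m : int,
    phi (n + 2) m + h n m * phi (n + 1) m + alpha ^+ 2 * phi n m = p ^+ 2 * phi n m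
    /\ phi n (m + 1) = phi (n + 1) m - g n m * phi n m.

(* Value of phi(n+2,m+1) obtained as hat(tilde tilde phi), computed with the
   system from the free data a = phi(n,m), b = phi(n+1,m):
   apply the first equation at (n,m+1), then express phi(n,m+1), phi(n+1,m+1)
   via the second equation, and phi(n+2,m) via the first. *)
Definition val_hat_tt (R : realType) (h g : int -> int -> R[i]) (alpha p : R[i])
    (n m : int) (a b : R[i]) : R[i] :=
  let phi_n_m1  := b - g n m * a in
  let phi_n2_m  := (p ^+ 2 - alpha ^+ 2) * a - h n m * b in
  let phi_n1_m1 := phi_n2_m - g (n + 1) m * b in
  (p ^+ 2 - alpha ^+ 2) * phi_n_m1 - h n (m + 1) * phi_n1_m1.

(* Value of phi(n+2,m+1) obtained as tilde tilde (hat phi): apply the second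
   equation at (n+2,m), then express phi(n+3,m), phi(n+2,m) via the first. *)
Definition val_tt_hat (R : realType) (h g : int -> int -> R[i]) (alpha p : R[i])
    (n m : int) (a b : R[i]) : R[i] :=
  let phi_n2_m := (p ^+ 2 - alpha ^+ 2) * a - h n m * b in
  let phi_n3_m := (p ^+ 2 - alpha ^+ 2) * b - h (n + 1) m * phi_n2_m in
  phi_n3_m - g (n + 2) m * phi_n2_m.

Definition lax_compatible (R : realType) (h g : int -> int -> R[i]) (alpha : R[i]) : Prop :=
  forall (p : R[i]) (n m : int) (a b : R[i]),
    val_hat_tt h g alpha p n m a b = val_tt_hat h g alpha p n m a b.

From mathcomp Require Import all_boot all_algebra complex.
From mathcomp Require Import reals ring.
Import GRing.Theory Num.Theory.
Local Open Scope ring_scope.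

(* The two ways of computing phi(n+2,m+1) from a = phi(n,m), b = phi(n+1,m)
   differ by a linear form in a, b whose a-coefficient is (p^2 - alpha^2) times
   hat h - tilde h - (tilde tilde g - g).  Compatibility for every p (choose
   p^2 - alpha^2 = 1) kills that coefficient; the b-coefficient then reduces,
   after eliminating hat h, to the shift invariance of (h + tilde g) g in n.
   The hat-direction equation needs no compatibility: for any solution,
   eliminating phi(n+2,m) and the hat shifts gives it with beta^2 replaced by
   (h + tilde g) g + alpha^2. *)

Lemma shift_invariant_const {T : Type} (f : int -> T) :
  (forall n, f (n + 1) = f n) -> forall n, f n = f 0.
Proof.
move=> f_shift; elim/int_ind => [//|k IHk|k IHk].
- by rewrite -IHk -[f k]f_shift -addn1 PoszD.
- by rewrite -IHk -[f (- k.+1%:Z)]f_shift -addn1 PoszD opprD addrNK.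
Qed.

Section LaxPair.

Context {R : realType} {h g : int -> int -> R[i]} {alpha : R[i]}.

Lemma val_hat_tt_sub_tt_hat p n m a b :
  val_hat_tt h g alpha p n m a b - val_tt_hat h g alpha p n m a b =
  b * (h n (m + 1) * (h n m + g (n + 1) m) - h n m * (h (n + 1) m + g (n + 2) m))
  - (p ^+ 2 - alpha ^+ 2) * a * (h n (m + 1) - h (n + 1) m - (g (n + 2) m - g n m)).
Proof. rewrite /val_hat_tt /val_tt_hat /=; ring. Qed.

Lemma lax_solution_hat_equation p phi :
  lax_solution h g alpha p phi -> forall n m,
    phi n (m + 2) + (h n m + g (n + 1) m + g n (m + 1)) * phi n (m + 1)
    + ((h n m + g (n + 1) m) * g n m + alpha ^+ 2) * phi n m = p ^+ 2 * phi n m.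
Proof.
move=> sol n m.
have [tt_eq hat_eq] := sol n m.
have [_ hat_eq1] := sol (n + 1) m.
have [_ hat_eq2] := sol n (m + 1).
rewrite -[m + 2]/(m + (1 + 1)) addrA hat_eq2 hat_eq1 -[n + 1 + 1]addrA hat_eq.
have -> : phi (n + 2) m = (p ^+ 2 - alpha ^+ 2) * phi n m - h n m * phi (n + 1) m.
  by rewrite mulrBl -tt_eq; ring.
ring.
Qed.

Hypothesis compat : lax_compatible h g alpha.

Lemma lax_compatible_zero_curvature n m :
  h n (m + 1) - h (n + 1) m = g (n + 2) m - g n m.
Proof.
have := val_hat_tt_sub_tt_hat (sqrtC (alpha ^+ 2 + 1)) n m 1 0.
rewrite compat subrr sqrtCK addrAC subrr add0r !mul1r mul0r sub0r.
by move/esym/eqP; rewrite oppr_eq0 subr_eq0 => /eqP.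
Qed.

Lemma lax_compatible_shift_invariant n m :
  (h (n + 1) m + g (n + 2) m) * g (n + 1) m = (h n m + g (n + 1) m) * g n m.
Proof.
have := val_hat_tt_sub_tt_hat 0 n m 0 1.
rewrite compat subrr mulr0 mul0r subr0 mul1r => /esym E.
have h_hat : h n (m + 1) = h (n + 1) m + g (n + 2) m - g n m.
  by rewrite -[LHS](subrK (h (n + 1) m)) lax_compatible_zero_curvature; ring.
by apply/eqP; rewrite -subr_eq0 -E h_hat; apply/eqP; ring.
Qed.

Lemma lax_compatible_conserved :
  exists c : int -> R[i], forall n m, (h n m + g (n + 1) m) * g n m = c m.
Proof.
pose c n m := (h n m + g (n + 1) m) * g n m.
exists (c 0) => n m.
apply: (shift_invariant_const (c^~ m)) => k.
by rewrite /c -addrA lax_compatible_shift_invariant.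
Qed.

End LaxPair.

Theorem proposition2p1 (R : realType) (h g : int -> int -> R[i]) (alpha : R[i]) :
  lax_compatible h g alpha ->
  (* hat h - tilde h = tilde tilde g - g *)
  (forall n m : int, h n (m + 1) - h (n + 1) m = g (n + 2) m - g n m)
  (* (h + tilde g) g is invariant under n |-> n+1 *)
  /\ (forall n m : int,
        (h (n + 1) m + g (n + 2) m) * g (n + 1) m = (h n m + g (n + 1) m) * g n m)
  (* after one summation in n: (h + tilde g) g = beta^2 - alpha^2,
     beta^2 - alpha^2 being the constant of integration (w.r.t. n) *)
  /\ (exists beta : int -> R[i], forall n m : int,
        (h n m + g (n + 1) m) * g n m = beta m ^+ 2 - alpha ^+ 2)
  (* if (h + tilde g) g = beta^2 - alpha^2 with beta constant, every solution
     satisfies the hat-direction equation with eta = h + tilde g + hat g *)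
  /\ (forall beta : R[i],
        (forall n m : int, (h n m + g (n + 1) m) * g n m = beta ^+ 2 - alpha ^+ 2) ->
        forall (p : R[i]) (phi : int -> int -> R[i]),
          lax_solution h g alpha p phi ->
          forall n m : int,
            phi n (m + 2) + (h n m + g (n + 1) m + g n (m + 1)) * phi n (m + 1)
              + beta ^+ 2 * phi n m = p ^+ 2 * phi n m).
Proof.
move=> compat; split; first exact: lax_compatible_zero_curvature.
split; first exact: lax_compatible_shift_invariant.
split.
  have [c conserved] := lax_compatible_conserved compat.
  exists (fun m => sqrtC (c m + alpha ^+ 2)) => n m.
  by rewrite sqrtCK addrK conserved.
move=> beta beta_eq p phi sol n m.
by have := lax_solution_hat_equation _ _ sol n m; rewrite beta_eq subrK.
Qed.
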